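(* For every homeomorphism $h$ of the Kirch space $(\mathbb{N},\tau_K)$ and every $x\in\mathbb{N}$, $\Pi_x\cup\{2\}=\Pi_{h(x)}\cup\{2\}$.
   Context: $\mathbb{N}=\{1,2,\dots\}$, $\mathbb{N}_0=\{0\}\cup\mathbb{N}$; $\Pi_x$ is the set of prime divisors of $x$. The Kirch topology $\tau_K$ on $\mathbb{N}$ is generated by the base of all $a+b\mathbb{N}_0=\{a+bn:n\in\mathbb{N}_0\}$ with $a,b\in\mathbb{N}$ coprime and $b$ square-free. *)

From mathcomp Require Import all_boot.
Set Implicit Arguments. Unset Strict Implicit. Unset Printing Implicit Defensive.

Definition Npos := {n : nat | 0 < n}.

Definition squarefree (b : nat) : bool :=
  [forall p : 'I_b.+1, prime p ==> ~~ (p ^ 2 %| b)].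

Definition progr (a b : nat) (x : Npos) : Prop := exists n : nat, val x = a + b * n.

Definition kirch_basic (a b : nat) : Prop :=
  0 < a /\ 0 < b /\ coprime a b /\ squarefree b.

Definition kirch_open (U : Npos -> Prop) : Prop :=
  forall x, U x -> exists a b, kirch_basic a b /\ progr a b x /\
                                (forall y, progr a b y -> U y).

Definition kirch_continuous (f : Npos -> Npos) : Prop :=
  forall U, kirch_open U -> kirch_open (fun x => U (f x)).

Definition kirch_homeomorphism (h : Npos -> Npos) : Prop :=
  exists g : Npos -> Npos, cancel h g /\ cancel g h /\
    kirch_continuous h /\ kirch_continuous g.

Definition Pi (x : nat) : nat -> bool := fun p => prime p && (p %| x).

From mathcomp Require Import all_boot zify.
From Stdlib Require Import Classical IndefiniteDescription.
Set Implicit Arguments. Unset Strict Implicit. Unset Printing Implicit Defensive.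

(* The sets t + cN with c squarefree and coprime to t form a neighbourhood base
   at t, so the closure of t + cN is the set of s such that, for every prime
   q | c, either q | s or s = t mod q.

   For an odd prime p, the multiples of p (Z) and the classes a + pN, 0 < a < p
   (V a), satisfy a list of purely topological properties, which a
   homeomorphism preserves. It thus suffices to show that in any such
   configuration every point y of Z is divisible by p. Otherwise the locality
   property of the configuration, applied in the neighbourhood y + pN, yields a
   point z' of Z, a prime r0 | z' and a neighbourhood z' + FN on which each V a
   is, away from multiples of r0, a single nonzero residue class mod r0, with
   distinct a giving distinct classes and every nonzero class occurring.
   Counting the classes gives r0 = p, so p | z', whereas z' = y mod p. *)

(* Unlike [squarefree], this excludes 0. *)
Definition sqfree (n : nat) : Prop := 0 < n /\ forall q, logn q n <= 1.

Lemma sqfree_dvd c d : sqfree c -> d %| c -> sqfree d.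
Proof.
move=> [c0 Hc] dc; split=> [|q]; first exact: dvdn_gt0 dc.
exact: leq_trans (dvdn_leq_log _ c0 dc) (Hc q).
Qed.

Lemma sqfree_lcm c d : sqfree c -> sqfree d -> sqfree (lcmn c d).
Proof.
move=> [c0 Hc] [d0 Hd]; split=> [|q]; first by rewrite lcmn_gt0 c0 d0.
by rewrite logn_lcm // geq_max Hc Hd.
Qed.

Lemma sqfree_prime q : prime q -> sqfree q.
Proof.
move=> qp; split=> [|r]; first exact: prime_gt0.
by rewrite logn_prime //; case: (r == q).
Qed.

Lemma sqfreeE b : sqfree b <-> 0 < b /\ squarefree b.
Proof.
split=> [[b0 Hb]|[b0 /forallP sq]]; split=> //.
  apply/forallP => q; apply/implyP => qp.
  by rewrite pfactor_dvdn // -ltnNge ltnS Hb.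
move=> q; rewrite leqNgt; apply/negP => Hq.
have := ltnW Hq; rewrite logn_gt0 mem_primes => /and3P[qp _ qb].
have /implyP := sq (Ordinal (dvdn_leq b0 qb : q < b.+1)).
by move/(_ qp); rewrite /= pfactor_dvdn // Hq.
Qed.

Lemma coprime_of_primes m n : 0 < m ->
  (forall q, prime q -> q %| m -> ~~ (q %| n)) -> coprime m n.
Proof.
move=> m0 H; apply/negPn/negP => nc.
have g1 : 1 < gcdn m n.
  by move: nc (gcdn_gt0 m n); rewrite m0 /coprime; case: (gcdn m n) => [|[]].
have := H _ (pdiv_prime g1) (dvdn_trans (pdiv_dvd _) (dvdn_gcdl m n)).
by rewrite (dvdn_trans (pdiv_dvd _) (dvdn_gcdr m n)).
Qed.

Lemma prime_coprimer p m : prime p -> coprime m p = ~~ (p %| m).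
Proof. by move=> pp; rewrite coprime_sym prime_coprime. Qed.

Lemma coprime_lcm n a b : coprime n a -> coprime n b -> coprime n (lcmn a b).
Proof.
move=> na nb; have lab : lcmn a b %| a * b by rewrite dvdn_lcm dvdn_mulr // dvdn_mull.
by apply: coprime_dvdr lab _; rewrite coprimeMr na nb.
Qed.

Lemma eqmod_dvd d c a b : d %| c -> a = b %[mod c] -> a = b %[mod d].
Proof. by move=> dc ab; rewrite -(modn_dvdm a dc) ab modn_dvdm. Qed.

Lemma coprime_eqmod a b c : a = b %[mod c] -> coprime a c = coprime b c.
Proof. by move=> ab; rewrite -coprime_modl ab coprime_modl. Qed.

Lemma dvdn_eqmod r a b : a = b %[mod r] -> (r %| a) = (r %| b).
Proof. by rewrite /dvdn => ->. Qed.

Lemma sqfree_div_gcd c X : sqfree c -> 0 < X ->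
  [/\ sqfree (c %/ gcdn c X), coprime (c %/ gcdn c X) X & c %| c %/ gcdn c X * X].
Proof.
move=> [c0 Hc] X0; have gc := dvdn_gcdl c X.
have cE : c = c %/ gcdn c X * gcdn c X by rewrite divnK.
have e0 : 0 < c %/ gcdn c X by rewrite divn_gt0 ?gcdn_gt0 ?c0 // dvdn_leq.
split.
- exact: sqfree_dvd (conj c0 Hc) (dvdn_div gc).
- apply: coprime_of_primes => // q qp qe; apply/negP => qX.
  have : 0 < logn q (c %/ gcdn c X) by rewrite logn_gt0 mem_primes qp e0.
  have : 0 < logn q X by rewrite logn_gt0 mem_primes qp X0.
  rewrite logn_div // logn_gcd //; move: (Hc q); lia.
- by rewrite {1}cE dvdn_pmul2l ?dvdn_gcdr.
Qed.

Lemma sqfree_div_prime c q : sqfree c -> prime q -> q %| c ->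
  sqfree (c %/ q) /\ coprime (c %/ q) q.
Proof.
move=> sc qp qc; have [sq cq _] := sqfree_div_gcd sc (prime_gt0 qp).
by rewrite (gcdn_idPr qc) in sq cq.
Qed.

Lemma sqfree_dvdn_primes n G : sqfree G ->
  (forall q, prime q -> q %| G -> q %| n) -> G %| n.
Proof.
elim/ltn_ind: G => G IH sG H; case: (ltnP 1 G) => [G1|]; last first.
  by case: G sG {IH H} => [[]|[]].
have qp : prime (pdiv G) by apply: pdiv_prime.
have qG := pdiv_dvd G; set q := pdiv G in qp qG *.
have [sq cq] := sqfree_div_prime sG qp qG.
rewrite -(divnK qG) Gauss_dvd // (H q) // andbT; apply: IH => // [|r rp rd].
  by rewrite ltn_Pdiv // ?prime_gt1 // ltnW.
exact: H _ rp (dvdn_trans rd (dvdn_div qG)).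
Qed.

Lemma sqfree_eqmod G a b : sqfree G ->
  (forall q, prime q -> q %| G -> a = b %[mod q]) -> a = b %[mod G].
Proof.
move=> sG H; wlog le_ba : a b H / b <= a.
  move=> W; case: (leqP b a) => [ba|/ltnW ab]; first exact: W.
  by apply/esym/W => // q qp qG; rewrite H.
apply/eqP; rewrite eqn_mod_dvd //; apply: sqfree_dvdn_primes => // q qp qG.
by rewrite -eqn_mod_dvd //; apply/eqP/H.
Qed.

Lemma chinese_Npos m n a b : coprime m n -> 0 < m -> 0 < n ->
  exists s : Npos, val s = a %[mod m] /\ val s = b %[mod n].
Proof.
move=> cmn m0 n0.
have s0 : 0 < chinese m n a b + m * n by rewrite addn_gt0 muln_gt0 m0 n0 orbT.
exists (exist (fun k => 0 < k) _ s0); rewrite /= addnC.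
by split; [rewrite [m * n]mulnC|]; rewrite modnMDl ?chinese_modl ?chinese_modr.
Qed.

Lemma chinese_sqfree c d a b : sqfree c -> sqfree d ->
  (forall q, prime q -> q %| c -> q %| d -> a = b %[mod q]) ->
  exists s : Npos, val s = a %[mod c] /\ val s = b %[mod d].
Proof.
move=> sc sd H; have [sd' cd' _] := sqfree_div_gcd sd sc.1.
set G := gcdn d c in sd' cd'; set d' := d %/ G in sd' cd'.
have [Gd Gc] : G %| d /\ G %| c by rewrite dvdn_gcdl dvdn_gcdr.
have [s [sa sb]] := chinese_Npos a b (etrans (coprime_sym _ _) cd') sc.1 sd'.1.
exists s; split => //; apply/eqP.
rewrite -(divnK Gd) -/d' chinese_remainder ?(coprime_dvdr Gc) // sb eqxx /=.
apply/eqP; rewrite -(modn_dvdm _ Gc) sa modn_dvdm //.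
apply: sqfree_eqmod (sqfree_dvd sc Gc) _ => q qp qG.
exact: H (dvdn_trans qG Gc) (dvdn_trans qG Gd).
Qed.

Lemma leq_of_rel_inj m n (R : nat -> nat -> Prop) :
  (forall a, a < m -> exists2 b, b < n & R a b) ->
  (forall a a' b, a < m -> a' < m -> b < n -> R a b -> R a' b -> a = a') ->
  m <= n.
Proof.
move=> Rtot Rinj.
have img (i : 'I_m) : {j : 'I_n | R i j}.
  apply: constructive_indefinite_description.
  by have [b bn Rib] := Rtot i (ltn_ord i); exists (Ordinal bn).
have f_inj : injective (fun i => sval (img i)).
  move=> i j eq_ij; apply: val_inj; apply: Rinj (ltn_ord i) (ltn_ord j) (ltn_ord _) _ _.
    exact: svalP (img i).
  by rewrite eq_ij; exact: svalP (img j).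
by have := leq_card _ f_inj; rewrite !card_ord.
Qed.

Lemma pred_eq_of_rel_bij m n (R : nat -> nat -> Prop) :
  (forall a, 0 < a < m -> exists2 b, 0 < b < n & R a b) ->
  (forall b, 0 < b < n -> exists2 a, 0 < a < m & R a b) ->
  (forall a a' b, 0 < a < m -> 0 < a' < m -> 0 < b < n -> R a b -> R a' b -> a = a') ->
  (forall a b b', 0 < a < m -> 0 < b < n -> 0 < b' < n -> R a b -> R a b' -> b = b') ->
  m.-1 = n.-1.
Proof.
have shift k i : (i < k.-1) = (0 < i.+1 < k) by rewrite ltn_predRL.
have unshift k b : 0 < b < k -> exists2 i, i < k.-1 & b = i.+1.
  by case: b => // i; exists i; rewrite // shift.
move=> Rl Rr Rinj Rfun; apply/eqP; rewrite eqn_leq.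
apply/andP; split; [apply: (@leq_of_rel_inj _ _ (fun i j => R i.+1 j.+1)) |
                    apply: (@leq_of_rel_inj _ _ (fun j i => R i.+1 j.+1))].
- move=> i; rewrite shift => /Rl[_ /unshift[j jn ->]]; by exists j.
- by move=> i i' j; rewrite !shift => ilt i'lt jlt /(Rinj _ _ _ ilt i'lt jlt) H /H[].
- move=> j; rewrite shift => /Rr[_ /unshift[i im ->]]; by exists i.
- by move=> j j' i; rewrite !shift => jlt j'lt ilt /(Rfun _ _ _ ilt jlt j'lt) H /H[].
Qed.

Lemma prime_gt2 q : prime q -> q != 2 -> 2 < q.
Proof. by move=> qp; case: (even_prime qp) => [->//|/odd_prime_gt2/(_ qp)]. Qed.

Lemma eqmod2_coprime a b c d : 2 %| c -> 2 %| d ->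
  coprime a c -> coprime b d -> a = b %[mod 2].
Proof.
move=> c2 d2 ac bd; have := coprime_dvdr c2 ac; have := coprime_dvdr d2 bd.
by rewrite !prime_coprimer // !dvdn2 !negbK !modn2 => -> ->.
Qed.

Definition mod_class (t c : nat) (s : Npos) : Prop := val s = t %[mod c].

Definition closure (S : Npos -> Prop) (t : Npos) : Prop :=
  forall U, kirch_open U -> U t -> exists2 s, U s & S s.

Lemma mod_class_open t c : sqfree c -> coprime t c -> kirch_open (mod_class t c).
Proof.
move=> /sqfreeE[c0 sqc] ct s ts; exists (val s), c; split; last split.
- by do !split; rewrite ?(valP s) ?(coprime_eqmod ts).
- by exists 0; rewrite muln0 addn0.
- by move=> y [k yE]; rewrite /mod_class yE -ts addnC mulnC modnMDl.
Qed.

Lemma kirch_open_nbhd U t : kirch_open U -> U t ->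
  exists c, [/\ sqfree c, coprime (val t) c & forall s, mod_class (val t) c s -> U s].
Proof.
move=> oU Ut; have [a [b [abK [[n tE] abU]]]] := oU t Ut.
have [a0 [b0 [ab sqb]]] := abK; have sb : sqfree b by apply/sqfreeE.
(* With a prime q > t + b, t is the least element of its class modulo lcm(b, q),
   so that whole class lies in a + bN. *)
have [q tbq qp] := prime_above (val t + b).
have [qL bL] : q %| lcmn b q /\ b %| lcmn b q by rewrite dvdn_lcml dvdn_lcmr.
have L0 : 0 < lcmn b q by rewrite lcmn_gt0 b0 prime_gt0.
have tq : val t < q := leq_ltn_trans (leq_addr b _) tbq.
have tL : val t < lcmn b q := leq_trans tq (dvdn_leq L0 qL).
exists (lcmn b q); split; first exact: sqfree_lcm sb (sqfree_prime qp).
  apply: coprime_lcm; first by rewrite tE -coprime_modl addnC mulnC modnMDl coprime_modl.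
  by rewrite prime_coprimer // gtnNdvd ?(valP t).
move=> s st; apply: abU; exists (n + val s %/ lcmn b q * (lcmn b q %/ b)).
set k := val s %/ lcmn b q; set m := lcmn b q %/ b.
rewrite (divn_eq (val s) (lcmn b q)) -/k st (modn_small tL) tE -(divnK bL) -/m.
by rewrite mulnA [k * m * b]mulnC mulnDr addnCA [b * n + _]addnC.
Qed.

Lemma kirch_openI A B :
  kirch_open A -> kirch_open B -> kirch_open (fun s => A s /\ B s).
Proof.
move=> oA oB t [At Bt].
have [c1 [s1 ct1 H1]] := kirch_open_nbhd oA At.
have [c2 [s2 ct2 H2]] := kirch_open_nbhd oB Bt.
have [a [b [ab [tab abL]]]] :=
  mod_class_open (sqfree_lcm s1 s2) (coprime_lcm ct1 ct2) (erefl (val t %% _)).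
exists a, b; do 2 split=> //; move=> y /abL yt.
by split; [apply: H1 | apply: H2]; apply: eqmod_dvd yt; rewrite ?dvdn_lcml ?dvdn_lcmr.
Qed.

Lemma closure_sub (A B : Npos -> Prop) t :
  (forall s, A s -> B s) -> closure A t -> closure B t.
Proof. by move=> AB At U oU Ut; have [s Us /AB Bs] := At U oU Ut; exists s. Qed.

Lemma closure_self (S : Npos -> Prop) t : S t -> closure S t.
Proof. by move=> St U _ Ut; exists t. Qed.

Lemma not_closure_nbhd (S : Npos -> Prop) t : ~ closure S t ->
  exists U, [/\ kirch_open U, U t & forall s, U s -> ~ S s].
Proof.
move=> nSt; apply: NNPP => nU; apply: nSt => U oU Ut; apply: NNPP => nUS.
by apply: nU; exists U; split=> // s Us Ss; apply: nUS; exists s.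
Qed.

Lemma kirch_open_not_closure S : kirch_open (fun s => ~ closure S s).
Proof.
move=> t /not_closure_nbhd[U [oU Ut US]].
have [c [sc ct cU]] := kirch_open_nbhd oU Ut.
have [a [b [ab [tab abc]]]] := mod_class_open sc ct (erefl (val t %% _)).
exists a, b; do 2 split=> //; move=> y /abc yt Sy.
have [x xy Sx] := Sy _ (mod_class_open sc (etrans (coprime_eqmod yt) ct)) (erefl _).
by apply: US (cU x _) Sx; rewrite /mod_class xy yt.
Qed.

Lemma closure_mod_classP c w t : sqfree c ->
  closure (mod_class w c) t <->
  (forall q, prime q -> q %| c -> q %| val t \/ val t = w %[mod q]).
Proof.
move=> sc; split=> [wt q qp qc | H U oU Ut].
  case: (boolP (q %| val t)) => [|qt]; [by left | right].
  have tq : coprime (val t) q by rewrite prime_coprimer.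
  have [s st sw] := wt _ (mod_class_open (sqfree_prime qp) tq) (erefl _).
  by rewrite -st; apply: eqmod_dvd qc sw.
have [d [sd td dU]] := kirch_open_nbhd oU Ut.
have [|s [st sw]] := @chinese_sqfree d c (val t) w sd sc; last by exists s; [apply: dU|].
move=> q qp qd qc; have [qt|//] := H q qp qc.
by move: (coprime_dvdr qd td); rewrite prime_coprimer // qt.
Qed.

Lemma closure_mod_class_split c m n w t : sqfree c -> c %| m * n -> m %| val t ->
  (forall q, prime q -> q %| n -> val t = w %[mod q]) -> closure (mod_class w c) t.
Proof.
move=> sc cmn mt Hn; apply/closure_mod_classP => // q qp qc.
have /dvdn_trans/(_ cmn) := qc; rewrite Euclid_dvdM // => /orP[qm|/(Hn q qp)].
  by left; apply: dvdn_trans qm mt.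
by right.
Qed.

(* Z plays the role of pN and V a that of a + pN. In rp_local, W is a
   neighbourhood of t in which an open subset of V a accumulating at every point
   of Z accumulates at every point of V a. *)
Record residue_partition (p : nat) (V : nat -> Npos -> Prop) (Z : Npos -> Prop) : Prop := {
  rp_prime : prime p;
  rp_gt2 : 2 < p;
  rp_open : forall a, 0 < a < p -> kirch_open (V a);
  rp_disjoint : forall a b t, 0 < a < p -> 0 < b < p -> V a t -> V b t -> a = b;
  rp_cover : forall t, Z t \/ exists2 a, 0 < a < p & V a t;
  rp_dense : forall a t, 0 < a < p -> Z t -> closure (V a) t;
  rp_local : forall t W0, Z t -> kirch_open W0 -> W0 t ->
    exists W, [/\ kirch_open W, W t, forall s, W s -> W0 s &
      forall a V', 0 < a < p -> kirch_open V' -> (forall s, V' s -> V a s /\ W s) ->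
        (forall s, Z s -> W s -> closure V' s) ->
        forall s, V a s -> W s -> closure V' s] }.

Section ResiduePartition.

Variables (p : nat) (V : nat -> Npos -> Prop) (Z : Npos -> Prop).
Hypothesis rpVZ : residue_partition p V Z.

Lemma rp_range1 : 0 < 1 < p.
Proof. by rewrite /= (ltn_trans _ (rp_gt2 rpVZ)). Qed.

Lemma rp_range2 : 0 < 2 < p.
Proof. exact: rp_gt2 rpVZ. Qed.

Lemma closure_V_eq a b t : 0 < a < p -> 0 < b < p -> V b t -> closure (V a) t -> a = b.
Proof.
move=> ha hb Vbt /(_ _ (rp_open rpVZ hb) Vbt)[s Vbs Vas].
exact (rp_disjoint rpVZ ha hb Vas Vbs).
Qed.

Section Chart.

Variables (r0 u F : nat) (z' : Npos).

Record residue_chart : Prop := {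
  chart_prime : prime r0;
  chart_sqfree : sqfree F;
  chart_coprime_z : coprime (val z') F;
  chart_coprime_r : coprime F r0;
  chart_dvd_z : r0 %| val z';
  chart_Z : Z z';
  chart_coprime_u : coprime u r0;
  chart_V1 : forall w, mod_class (val z') F w -> V 1 w -> val w = u %[mod r0];
  chart_Vn1 : forall a w, 0 < a < p -> a != 1 -> V a w -> mod_class (val z') F w ->
    ~~ (r0 %| val w) -> val w = u %[mod r0] -> False }.

Hypothesis ch : residue_chart.

Local Notation N := (mod_class (val z') F).

Lemma chart_Vn1_unit a w : 0 < a < p -> a != 1 -> V a w -> N w ->
  ~~ (r0 %| val w) /\ val w <> u %[mod r0].
Proof.
move=> ha a1 Vw Nw; have r0p := chart_prime ch.
suff nrw : ~~ (r0 %| val w) by split=> // /(chart_Vn1 ch ha a1 Vw Nw nrw).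
apply/negP => rw.
have oN := mod_class_open (chart_sqfree ch) (chart_coprime_z ch).
have [c [sc cw cVN]] := kirch_open_nbhd (kirch_openI (rp_open rpVZ ha) oN) (conj Vw Nw).
have cr : coprime c r0 by rewrite coprime_sym (coprime_dvdl rw cw).
have [s [sw su]] := chinese_Npos (val w) u cr sc.1 (prime_gt0 r0p).
have [Vs Ns] := cVN s sw.
apply: (chart_Vn1 ch ha a1 Vs Ns _ su).
by rewrite (dvdn_eqmod su) -prime_coprimer // chart_coprime_u.
Qed.

Lemma chart_Z_dvd t : Z t -> N t -> r0 %| val t.
Proof.
move=> Zt Nt; have r0p := chart_prime ch.
apply: contraT => rt; exfalso.
have ctFr : coprime (val t) (lcmn F r0).
  apply: coprime_lcm; last by rewrite prime_coprimer.
  by rewrite (coprime_eqmod Nt) (chart_coprime_z ch).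
have oU := mod_class_open (sqfree_lcm (chart_sqfree ch) (sqfree_prime r0p)) ctFr.
have near_t a : 0 < a < p -> exists2 w, V a w & N w /\ val w = val t %[mod r0].
  move=> ha; have [w wt Vw] := rp_dense rpVZ ha Zt oU (erefl _).
  by exists w => //; split; [rewrite /mod_class -Nt|]; apply: eqmod_dvd wt;
     rewrite ?dvdn_lcml ?dvdn_lcmr.
have [w1 V1 [N1 w1t]] := near_t 1 (rp_range1).
have [w2 V2 [N2 w2t]] := near_t 2 (rp_range2).
apply: (chart_Vn1_unit rp_range2 isT V2 N2).2.
by rewrite w2t -w1t (chart_V1 ch N1 V1).
Qed.

Lemma chart_residue_inj a b w w' : 0 < a < p -> 0 < b < p ->
  V a w -> N w -> V b w' -> N w' -> val w = val w' %[mod r0] -> ~~ (r0 %| val w) -> a = b.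
Proof.
move=> ha hb Vw Nw Vw' Nw' ww' rw; have r0p := chart_prime ch.
have [c [sc cw cV]] := kirch_open_nbhd (rp_open rpVZ ha) Vw.
have [c' [sc' cw' cV']] := kirch_open_nbhd (rp_open rpVZ hb) Vw'.
have Fr0 : 0 < F * r0 by rewrite muln_gt0 (chart_sqfree ch).1 prime_gt0.
have [sm cop dv] := sqfree_div_gcd sc Fr0.
have [sm' cop' dv'] := sqfree_div_gcd sc' Fr0.
set m := c %/ gcdn c (F * r0) in sm cop dv.
set m' := c' %/ gcdn c' (F * r0) in sm' cop' dv'.
(* t is divisible by the parts of c and c' prime to F r0 and agrees with w and w'
   modulo F r0, hence lies in the closure of both V a and V b. *)
have [t1 [t1z t1w]] := chinese_Npos (val z') (val w) (chart_coprime_r ch)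
  (chart_sqfree ch).1 (prime_gt0 r0p).
have cM : coprime (m * m') (F * r0) by rewrite coprimeMl cop cop'.
have M0 : 0 < m * m' by rewrite muln_gt0 sm.1 sm'.1.
have [t [t0 tt1]] := chinese_Npos 0 (val t1) cM M0 Fr0.
have mm't : m * m' %| val t by rewrite /dvdn t0 mod0n.
have mt := dvdn_trans (dvdn_mulr m' (dvdnn m)) mm't.
have m't := dvdn_trans (dvdn_mull m (dvdnn m')) mm't.
have tF : val t = val z' %[mod F] by rewrite (eqmod_dvd (dvdn_mulr r0 (dvdnn F)) tt1).
have tr : val t = val w %[mod r0] by rewrite (eqmod_dvd (dvdn_mull F (dvdnn r0)) tt1).
have agree x : N x -> val x = val w %[mod r0] ->
    forall q, prime q -> q %| F * r0 -> val t = val x %[mod q].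
  move=> Nx xw q qp; rewrite Euclid_dvdM // => /orP[qF|].
    by apply: eqmod_dvd qF _; rewrite tF Nx.
  by rewrite dvdn_prime2 // => /eqP->; rewrite tr xw.
have Ca : closure (V a) t :=
  closure_sub cV (closure_mod_class_split sc dv mt (agree w Nw erefl)).
have Cb : closure (V b) t :=
  closure_sub cV' (closure_mod_class_split sc' dv' m't (agree w' Nw' (esym ww'))).
case: (rp_cover rpVZ t) => [Zt|[k hk Vk]].
  by move: (chart_Z_dvd Zt tF); rewrite (dvdn_eqmod tr) (negbTE rw).
by rewrite (closure_V_eq ha hk Vk Ca) (closure_V_eq hb hk Vk Cb).
Qed.

Lemma chart_V_residue a w s : 0 < a < p -> V a w -> N w -> ~~ (r0 %| val w) ->
  N s -> val s = val w %[mod r0] -> V a s.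
Proof.
move=> ha Vw Nw rw Ns sw; case: (rp_cover rpVZ s) => [Zs|[k hk Vk]].
  by move: (chart_Z_dvd Zs Ns); rewrite (dvdn_eqmod sw) (negbTE rw).
by rewrite (chart_residue_inj ha hk Vw Nw Vk Ns (esym sw) rw).
Qed.

Lemma chart_residue_const a w w' : 0 < a < p -> a != 1 -> V a w -> N w -> V a w' -> N w' ->
  val w = val w' %[mod r0].
Proof.
move=> ha a1 Vw Nw Vw' Nw'; have r0p := chart_prime ch.
have [rw _] := chart_Vn1_unit ha a1 Vw Nw; have [rw' _] := chart_Vn1_unit ha a1 Vw' Nw'.
have [W [oW Wz WN Wloc]] := rp_local rpVZ (chart_Z ch)
  (mod_class_open (chart_sqfree ch) (chart_coprime_z ch)) (erefl (val z' %% F)).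
have nearZ (x y : Npos) : W x -> r0 %| val x ->
    forall U, kirch_open U -> U x -> exists2 s, U s /\ W s & val s = val y %[mod r0].
  move=> Wx rx U oU Ux.
  have [d [sd xd dUW]] := kirch_open_nbhd (kirch_openI oU oW) (conj Ux Wx).
  have dr : coprime d r0 by rewrite coprime_sym (coprime_dvdl rx xd).
  have [s [sx sy]] := chinese_Npos (val x) (val y) dr sd.1 (prime_gt0 r0p).
  by exists s; first exact: dUW.
(* By rp_local, the part of V a near z' congruent to w mod r0 accumulates at all
   of V a near z', in particular at points congruent to w'. *)
pose V' s := V a s /\ W s /\ mod_class (val w) r0 s.
have oV' : kirch_open V'.
  have wr0 : coprime (val w) r0 by rewrite prime_coprimer.
  have oWw := kirch_openI oW (mod_class_open (sqfree_prime r0p) wr0).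
  exact: kirch_openI (rp_open rpVZ ha) oWw.
have ZW_V' x : Z x -> W x -> closure V' x.
  move=> Zx Wx U oU Ux.
  have [s [Us Ws] sw] := nearZ x w Wx (chart_Z_dvd Zx (WN x Wx)) U oU Ux.
  by exists s => //; split; first exact: chart_V_residue ha Vw Nw rw (WN s Ws) sw.
have [s [_ Ws] sw'] := nearZ z' w' Wz (chart_dvd_z ch) W oW Wz.
have Vs : V a s := chart_V_residue ha Vw' Nw' rw' (WN s Ws) sw'.
have C := Wloc a V' ha oV' (fun x V'x => conj V'x.1 V'x.2.1) ZW_V' s Vs Ws.
have sr : coprime (val s) r0 by rewrite (coprime_eqmod sw') prime_coprimer.
have [x xs [_ [_ xw]]] := C _ (mod_class_open (sqfree_prime r0p) sr) (erefl _).
by rewrite -xw xs sw'.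
Qed.

Lemma chart_prime_eq : r0 = p.
Proof.
have r0p := chart_prime ch; have r00 := prime_gt0 r0p.
have oN := mod_class_open (chart_sqfree ch) (chart_coprime_z ch).
have unit_mod (w : Npos) : (0 < val w %% r0) = ~~ (r0 %| val w) by rewrite lt0n.
suff e : p.-1 = r0.-1 by rewrite -(prednK r00) -e prednK // prime_gt0 // (rp_prime rpVZ).
apply: (@pred_eq_of_rel_bij _ _ (fun a b => exists2 w, V a w /\ N w & val w %% r0 = b)).
- move=> a ha; have [w Nw Vw] := rp_dense rpVZ ha (chart_Z ch) oN (erefl _).
  have rw : ~~ (r0 %| val w).
    have [a1|a1] := eqVneq a 1; last exact: (chart_Vn1_unit ha a1 Vw Nw).1.
    rewrite a1 in Vw; rewrite (dvdn_eqmod (chart_V1 ch Nw Vw)).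
    by rewrite -prime_coprimer // chart_coprime_u.
  by exists (val w %% r0); [rewrite unit_mod rw ltn_pmod | exists w].
- move=> b /andP[b0 br].
  have [s [sz sb]] := chinese_Npos (val z') b (chart_coprime_r ch) (chart_sqfree ch).1 r00.
  rewrite (modn_small br) in sb.
  case: (rp_cover rpVZ s) => [Zs|[a ha Vs]]; last by exists a => //; exists s.
  by move: (chart_Z_dvd Zs sz); rewrite /dvdn sb eqn0Ngt b0.
- move=> a a' b ha ha' /andP[b0 _] [w [Vw Nw] wb] [w' [Vw' Nw'] w'b].
  by apply: chart_residue_inj ha ha' Vw Nw Vw' Nw' _ _; rewrite -?unit_mod /= wb ?w'b.
- move=> a b b' ha _ _ [w [Vw Nw] <-] [w' [Vw' Nw'] <-].
  have [a1|a1] := eqVneq a 1; last exact: chart_residue_const ha a1 Vw Nw Vw' Nw'.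
  by rewrite a1 in Vw Vw'; rewrite (chart_V1 ch Nw Vw) (chart_V1 ch Nw' Vw').
Qed.

End Chart.

(* V 1 meets every neighbourhood of y, at a point u with u + eN in V 1; the
   open set of points of V 1 outside the closure of u + eN does not accumulate
   at u, so by rp_local it fails to accumulate at some z in Z near y. *)
Lemma exists_V1_trap y W0 : Z y -> kirch_open W0 -> W0 y ->
  exists (u : Npos) e,
    [/\ sqfree e, coprime (val u) e & forall s, mod_class (val u) e s -> V 1 s] /\
  exists (z : Npos) f,
    [/\ Z z, sqfree f, coprime (val z) f, forall s, mod_class (val z) f s -> W0 s &
      forall s, mod_class (val z) f s -> V 1 s -> closure (mod_class (val u) e) s].
Proof.
move=> Zy oW0 W0y; have oV1 := rp_open rpVZ rp_range1.
have [W [oW Wy WW0 Wloc]] := rp_local rpVZ Zy oW0 W0y.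
have [u Wu V1u] := rp_dense rpVZ rp_range1 Zy oW Wy.
have [e [se ue ueVW]] := kirch_open_nbhd (kirch_openI oV1 oW) (conj V1u Wu).
exists u, e; split; first by split=> // s /ueVW[].
set O := mod_class (val u) e.
pose V' s := V 1 s /\ W s /\ ~ closure O s.
have oV' : kirch_open V' := kirch_openI oV1 (kirch_openI oW (@kirch_open_not_closure O)).
have V'W s : V' s -> V 1 s /\ W s by case=> V1s [].
have not_ZW : ~ (forall s, Z s -> W s -> closure V' s).
  move=> ZW; have := Wloc 1 V' rp_range1 oV' V'W ZW u V1u Wu O (mod_class_open se ue) erefl.
  by case=> s Os [_ [_]]; apply; apply: closure_self.
have [z [Zz [Wz zV']]] : exists z : Npos, Z z /\ W z /\ ~ closure V' z.
  apply: NNPP => noZ; apply: not_ZW => s Zs Ws.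
  by apply: NNPP => sV'; apply: noZ; exists s.
have [U [oU Uz UV']] := not_closure_nbhd zV'.
have [f [sf zf zfUW]] := kirch_open_nbhd (kirch_openI oU oW) (conj Uz Wz).
exists z, f; split=> // [s /zfUW[_ /WW0] //|s /zfUW[Us Ws] V1s].
by apply: NNPP => sO; apply: UV' Us _.
Qed.

Section Trap.

Variables (u z : Npos) (e f : nat).
Hypotheses (se : sqfree e) (ue : coprime (val u) e)
  (ueV1 : forall s, mod_class (val u) e s -> V 1 s).
Hypotheses (Zz : Z z) (sf : sqfree f) (zf : coprime (val z) f)
  (trap : forall s, mod_class (val z) f s -> V 1 s -> closure (mod_class (val u) e) s).

Lemma V_apart_from_u a (w : Npos) c : 0 < a < p -> a != 1 -> sqfree c ->
  (forall s, mod_class (val w) c s -> V a s) ->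
  (forall q, prime q -> q %| c -> q %| e -> val w = val u %[mod q]) -> False.
Proof.
move=> ha a1 sc wcV wu; have [s [sw su]] := chinese_sqfree sc se wu.
by move: a1; rewrite (rp_disjoint rpVZ ha rp_range1 (wcV s sw) (ueV1 su)).
Qed.

Lemma trap_eqmod (w : Npos) r : mod_class (val z) f w -> V 1 w ->
  prime r -> 2 < r -> r %| e -> val w = val u %[mod r].
Proof.
move=> zw V1w rp r2 re.
have [rw|//] := (closure_mod_classP _ _ se).1 (trap zw V1w) r rp re; exfalso.
have [c [sc wc cV]] := kirch_open_nbhd
  (kirch_openI (rp_open rpVZ rp_range1) (mod_class_open sf zf)) (conj V1w zw).
have cr : coprime c r by rewrite coprime_sym (coprime_dvdl rw wc).
have [d [d0 dr du]] : exists d, [/\ 0 < d, d < r & d != val u %% r].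
  have r1 : 1 < r := ltn_trans (isT : 1 < 2) r2.
  case: (eqVneq (val u %% r) 1) => h; [exists 2 | exists 1].
    by rewrite h.
  by rewrite eq_sym.
have [s [sw sd]] := chinese_Npos (val w) d cr sc.1 (prime_gt0 rp).
rewrite (modn_small dr) in sd; have [V1s zs] := cV s sw.
have [|] := (closure_mod_classP _ _ se).1 (trap zs V1s) r rp re.
  by rewrite /dvdn sd eqn0Ngt d0.
by rewrite /= sd => ud; rewrite ud eqxx in du.
Qed.

Lemma trap_eqmod_center q : prime q -> 2 < q -> q %| e -> ~~ (q %| val z) ->
  val z = val u %[mod q].
Proof.
move=> qp q2 qe qz; have zq : coprime (val z) q by rewrite prime_coprimer.
have oU := mod_class_open (sqfree_lcm sf (sqfree_prime qp)) (coprime_lcm zf zq).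
have [w wz V1w] := rp_dense rpVZ rp_range1 Zz oU (erefl _).
have zw : mod_class (val z) f w by apply: eqmod_dvd wz; apply: dvdn_lcml.
rewrite -(trap_eqmod zw V1w qp q2 qe); apply: esym (eqmod_dvd _ wz).
exact: dvdn_lcmr.
Qed.

Lemma trap_common_prime : exists r0, [/\ prime r0, 2 < r0, r0 %| e & r0 %| val z].
Proof.
apply: NNPP => no_r0.
have [sm mz em] := sqfree_div_gcd se (valP z); set m := e %/ gcdn e (val z) in sm mz em.
have zfm : coprime (val z) (lcmn f m) by rewrite coprime_lcm // coprime_sym.
have [w zw V2w] :=
  rp_dense rpVZ rp_range2 Zz (mod_class_open (sqfree_lcm sf sm) zfm) (erefl _).
have [c [sc wc cV]] := kirch_open_nbhd (rp_open rpVZ rp_range2) V2w.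
apply: (V_apart_from_u rp_range2 isT sc cV) => q qp qc qe.
have [q2|q2] := eqVneq q 2.
  by rewrite q2 in qc qe *; apply: eqmod2_coprime qc qe wc ue.
have qz : ~~ (q %| val z).
  by apply/negP => qz; apply: no_r0; exists q; rewrite prime_gt2.
have qm : q %| m by move: (dvdn_trans qe em); rewrite Euclid_dvdM // (negbTE qz) orbF.
rewrite -(trap_eqmod_center qp (prime_gt2 qp q2) qe qz).
by apply: eqmod_dvd (dvdn_trans qm (dvdn_lcmr f m)) zw.
Qed.

Lemma exists_trap_center r0 : prime r0 -> r0 %| e -> r0 %| val z ->
  exists z' : Npos,
    [/\ val z' = val u %[mod e %/ r0], mod_class (val z) f z' & r0 %| val z'].
Proof.
move=> r0p r0e r0z; have [se' e'r0] := sqfree_div_prime se r0p r0e.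
set e' := e %/ r0 in se' e'r0 *; have e'e : e' %| e := dvdn_div r0e.
have [t [tu tz]] : exists t : Npos, val t = val u %[mod e'] /\ val t = val z %[mod f].
  apply: chinese_sqfree se' sf _ => q qp qe' qf.
  have [q2|q2] := eqVneq q 2.
    by rewrite q2 in qe' qf *; apply: eqmod2_coprime qe' qf (coprime_dvdr e'e ue) zf.
  apply/esym/trap_eqmod_center => //; first exact: prime_gt2.
    exact: dvdn_trans qe' e'e.
  by rewrite -prime_coprimer // (coprime_dvdr qf zf).
have e'fr0 : coprime (e' * f) r0.
  by rewrite coprimeMl e'r0 coprime_sym (coprime_dvdl r0z zf).
have e'f0 : 0 < e' * f by rewrite muln_gt0 se'.1 sf.1.
have [z' [z't z'r0]] := chinese_Npos (val t) 0 e'fr0 e'f0 (prime_gt0 r0p).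
exists z'; split; last by rewrite /dvdn z'r0 mod0n.
  exact: etrans (eqmod_dvd (dvdn_mulr f (dvdnn e')) z't) tu.
exact: etrans (eqmod_dvd (dvdn_mull e' (dvdnn f)) z't) tz.
Qed.

Lemma trap_chart :
  exists r0 F (z' : Npos), residue_chart r0 (val u) F z' /\ mod_class (val z) f z'.
Proof.
have [r0 [r0p r02 r0e r0z]] := trap_common_prime.
have [z' [z'u z'z r0z']] := exists_trap_center r0p r0e r0z.
have [se' e'r0] := sqfree_div_prime se r0p r0e; set e' := e %/ r0 in se' e'r0 z'u.
have ur0 : coprime (val u) r0 := coprime_dvdr r0e ue.
have apart a (w : Npos) c : 0 < a < p -> a != 1 -> sqfree c ->
    (forall s, mod_class (val w) c s -> V a s) -> val w = val z' %[mod e'] ->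
    (r0 %| c -> val w = val u %[mod r0]) -> False.
  move=> ha a1 sc cV wz' wr0; apply: (V_apart_from_u ha a1 sc cV) => q qp qc qe.
  have [qr0|qr0] := eqVneq q r0; first by rewrite qr0 in qc *; apply: wr0.
  have qe' : q %| e'.
    by move: qe; rewrite -(divnK r0e) Euclid_dvdM // (dvdn_prime2 qp r0p) (negbTE qr0) orbF.
  by apply: eqmod_dvd qe' _; rewrite wz' z'u.
exists r0, (lcmn f e'), z'; split=> //; split=> //.
- exact: sqfree_lcm sf se'.
- rewrite coprime_lcm // ?(coprime_eqmod z'z) ?(coprime_eqmod z'u) //.
  exact: coprime_dvdr (dvdn_div r0e) ue.
- rewrite coprime_sym; apply: coprime_lcm; first exact: coprime_dvdl r0z zf.
  by rewrite coprime_sym.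
- case: (rp_cover rpVZ z') => [//|[k hk Vk]]; exfalso.
  have [k1|k1] := eqVneq k 1.
    rewrite k1 in Vk; move: (trap_eqmod z'z Vk r0p r02 r0e) => /dvdn_eqmod.
    by rewrite r0z' -[r0 %| _]negbK -prime_coprimer // ur0.
  have [c [sc z'c cV]] := kirch_open_nbhd (rp_open rpVZ hk) Vk.
  apply: apart hk k1 sc cV erefl _ => r0c.
  by move: (coprime_dvdr r0c z'c); rewrite prime_coprimer // r0z'.
- move=> w Nw V1w; apply: trap_eqmod V1w r0p r02 r0e.
  by rewrite /mod_class (eqmod_dvd (dvdn_lcml f e') Nw) z'z.
- move=> a w ha a1 Vw Nw _ wu.
  have [c [sc wc cV]] := kirch_open_nbhd (rp_open rpVZ ha) Vw.
  by apply: apart ha a1 sc cV (eqmod_dvd (dvdn_lcmr f e') Nw) _.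
Qed.

End Trap.

Lemma rp_Z_dvd y : Z y -> p %| val y.
Proof.
move=> Zy; have pp := rp_prime rpVZ; apply: contraT => py.
have yp : coprime (val y) p by rewrite prime_coprimer.
have [u [e [[se ue ueV1] [z [f [Zz sf zf zfy trap]]]]]] :=
  exists_V1_trap Zy (mod_class_open (sqfree_prime pp) yp) (erefl _).
have [r0 [F [z' [ch z'z]]]] := trap_chart se ue ueV1 Zz sf zf trap.
have := chart_dvd_z ch.
by rewrite (chart_prime_eq ch) (dvdn_eqmod (zfy z' z'z)) (negbTE py).
Qed.

End ResiduePartition.

Lemma mod_class_local p t W0 : prime p -> p %| val t -> kirch_open W0 -> W0 t ->
  exists W, [/\ kirch_open W, W t, forall s, W s -> W0 s &
    forall a V', 0 < a < p -> kirch_open V' -> (forall s, V' s -> mod_class a p s /\ W s) ->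
      (forall s, p %| val s -> W s -> closure V' s) ->
      forall s, mod_class a p s -> W s -> closure V' s].
Proof.
move=> pp pt oW0 W0t; have [c [sc tc cW0]] := kirch_open_nbhd oW0 W0t.
exists (mod_class (val t) c); split=> // [|a V' ha oV' V'aW pV' x xa xt U oU Ux].
  exact: mod_class_open.
have [d [sd xd dUW]] :=
  kirch_open_nbhd (kirch_openI oU (mod_class_open sc tc)) (conj Ux xt).
have [sd' d'p dd'p] := sqfree_div_gcd sd (prime_gt0 pp).
set d' := d %/ gcdn d p in sd' d'p dd'p.
have xc : coprime (val x) c by rewrite (coprime_eqmod xt).
have xd' : coprime (val x) d' := coprime_dvdr (dvdn_div (dvdn_gcdl d p)) xd.
have Dp : coprime (lcmn d' c) p.
  rewrite coprime_sym; apply: coprime_lcm; last exact: coprime_dvdl pt tc.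
  by rewrite coprime_sym.
have sD := sqfree_lcm sd' sc.
have [s [sx sp]] := chinese_Npos (val x) 0 Dp sD.1 (prime_gt0 pp).
have sxc : val s = val x %[mod c] := eqmod_dvd (dvdn_lcmr d' c) sx.
have st : mod_class (val t) c s by rewrite /mod_class sxc.
have ps : p %| val s by rewrite /dvdn sp mod0n.
have [w ws V'w] := pV' s ps st _
  (mod_class_open sD (etrans (coprime_eqmod sx) (coprime_lcm xd' xc))) (erefl _).
have [wa _] := V'aW w V'w.
suff wx : mod_class (val x) d w by exists w => //; have [] := dUW w wx.
apply: eqmod_dvd dd'p _; apply/eqP.
rewrite chinese_remainder // (eqmod_dvd (dvdn_lcml d' c) ws).
by rewrite (eqmod_dvd (dvdn_lcml d' c) sx) eqxx wa xa eqxx.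
Qed.

Lemma residue_partition_mod p : prime p -> 2 < p ->
  residue_partition p (fun a => mod_class a p) (fun t => p %| val t).
Proof.
move=> pp p2; split=> // [a /andP[a0 ap]|a b t /andP[_ ap] /andP[_ bp]|t|a t _ pt|].
- by apply: mod_class_open (sqfree_prime pp) _; rewrite prime_coprimer // gtnNdvd.
- by rewrite /mod_class => -> /eqP; rewrite !modn_small // => /eqP.
- have [|pt] := boolP (p %| val t); [by left | right].
  exists (val t %% p); last by rewrite /mod_class modn_mod.
  by rewrite ltn_pmod ?(prime_gt0 pp) // andbT lt0n.
- apply/closure_mod_classP => [|q qp]; first exact: sqfree_prime.
  by rewrite dvdn_prime2 // => /eqP->; left.
- by move=> t W0 pt; apply: mod_class_local.
Qed.

Lemma closure_comp (f k : Npos -> Npos) (S : Npos -> Prop) t :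
  cancel f k -> cancel k f -> kirch_continuous f ->
  closure S (k t) -> closure (fun s => S (k s)) t.
Proof.
move=> fK kK f_cont St U oU Ut.
have Ufkt : U (f (k t)) by rewrite kK.
have [s Ufs Ss] := St _ (f_cont U oU) Ufkt.
by exists (f s); rewrite ?fK.
Qed.

Section Homeomorphism.

Variables h g : Npos -> Npos.
Hypotheses (hK : cancel h g) (gK : cancel g h).
Hypotheses (h_cont : kirch_continuous h) (g_cont : kirch_continuous g).

Lemma residue_partition_comp p V Z : residue_partition p V Z ->
  residue_partition p (fun a s => V a (g s)) (fun s => Z (g s)).
Proof.
case=> pp p2 V_open V_disj cover dense loc.
split=> [||a ha|a b t|t|a t ha Zt|t W0 Zt oW0 W0t] //.
- exact: g_cont (V_open a ha).
- exact: V_disj.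
- exact: closure_comp hK gK h_cont (dense a (g t) ha Zt).
have W0ht : W0 (h (g t)) by rewrite gK.
have [W [oW Wt WW0 Wloc]] := loc (g t) _ Zt (h_cont oW0) W0ht.
exists (fun s => W (g s)); split=> // [|s /WW0|a V' ha oV' V'VW ZW s Vs Ws].
- exact: g_cont.
- by rewrite gK.
have V'hVW y : V' (h y) -> V a y /\ W y by move=> /V'VW; rewrite hK.
have ZWh y : Z y -> W y -> closure (fun x => V' (h x)) y.
  by move=> Zy Wy; apply: closure_comp gK hK g_cont _; apply: ZW; rewrite hK.
have := closure_comp hK gK h_cont (Wloc a _ ha (h_cont oV') V'hVW ZWh (g s) Vs Ws).
by apply: closure_sub => x; rewrite gK.
Qed.

Lemma homeo_odd_prime_dvd x p : prime p -> 2 < p -> p %| val x -> p %| val (h x).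
Proof.
move=> pp p2 px.
apply: (rp_Z_dvd (residue_partition_comp (residue_partition_mod pp p2))).
by rewrite /= hK.
Qed.

End Homeomorphism.

Unset Implicit Arguments.

Theorem lemma3p16 (h : Npos -> Npos) :
  kirch_homeomorphism h ->
  forall (x : Npos) (p : nat),
    (Pi (val x) p || (p == 2)) = (Pi (val (h x)) p || (p == 2)).
Proof.
move=> [g [hK [gK [h_cont g_cont]]]] x p.
have [->|p2] := eqVneq p 2; first by rewrite !orbT.
rewrite !orbF /Pi; have [pp|] := boolP (prime p); last by [].
have p_gt2 := prime_gt2 pp p2.
apply/idP/idP; first exact: homeo_odd_prime_dvd.
by move/(homeo_odd_prime_dvd gK hK g_cont h_cont pp p_gt2); rewrite hK.
Qed.
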